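(* Let $D\subset\Phi^+$ be an orthogonal subset with $D\cap\mathcal C_1=\{\varepsilon_1-\varepsilon_j\}$ for some $1<j\le n$. Let $\tilde\Phi^+$ be the set of roots of $\Phi^+$ involving neither $\varepsilon_1$ nor $\varepsilon_j$ (i.e. $\tilde\Phi^+=\Phi^+\setminus(\mathcal C_1\cup\mathcal C_j\cup\mathcal R_j\cup\mathcal R_{-j})$), $\tilde D=D\cap\tilde\Phi^+$, $\tilde\sigma=\prod_{\beta\in\tilde D}r_\beta$, and $l'(\tilde\sigma)=\#\{\alpha\in\tilde\Phi^+:\tilde\sigma(\alpha)\notin\tilde\Phi^+\}$ (the length of $\tilde\sigma$ in the Weyl group of the root system $\tilde\Phi=\tilde\Phi^+\cup-\tilde\Phi^+$, which has the same type as $\Phi$ and rank $n-2$). Then $l(\sigma)=l'(\tilde\sigma)+|S(\varepsilon_1-\varepsilon_j)|+1$.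
   Context: Let $\Phi$ be a root system of type $B_n$, $C_n$ or $D_n$ in $\mathbb R^n$ with standard basis $\varepsilon_1,\dots,\varepsilon_n$ and positive roots $\Phi^+=\{\varepsilon_i\pm\varepsilon_j:1\le i<j\le n\}\cup\Phi_1^+$, where $\Phi_1^+=\emptyset$ for $D_n$, $\{\varepsilon_i\}$ for $B_n$, $\{2\varepsilon_i\}$ for $C_n$. $D\subset\Phi^+$ is orthogonal if its roots are pairwise orthogonal. $r_\beta$ denotes the reflection in the hyperplane orthogonal to $\beta$, $\sigma=\prod_{\beta\in D}r_\beta$, and $l(\sigma)=\#\{\alpha\in\Phi^+:\sigma(\alpha)\in-\Phi^+\}$ (the length of $\sigma$ in the Weyl group). $\mathrm{col}(\varepsilon_i\pm\varepsilon_j)=\mathrm{col}(\varepsilon_i)=\mathrm{col}(2\varepsilon_i)=i$; $\mathrm{row}(\varepsilon_i\pm\varepsilon_j)=\mp j$, $\mathrm{row}(\varepsilon_i)=0$, $\mathrm{row}(2\varepsilon_i)=-i$; $\mathcal R_i=\{\alpha\in\Phi^+:\mathrm{row}(\alpha)=i\}$, $\mathcal C_j=\{\alpha\in\Phi^+:\mathrm{col}(\alpha)=j\}$. For $\beta\in\Phi^+$, $S(\beta)=\{\alpha\in\Phi^+:\beta-\alpha\in\Phi^+\}$. *)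

From HB Require Import structures.
From mathcomp Require Import all_boot all_order all_algebra.
Unset Printing Implicit Defensive.
Import Order.TTheory GRing.Theory Num.Theory.

Inductive rtype := TypeB | TypeC | TypeD.

(* Positive roots, with 1-based indices as in the paper:
   PM i j = eps_i - eps_j,  PP i j = eps_i + eps_j  (i < j),
   PS i = eps_i (type B),   PL i = 2 eps_i (type C). *)
Inductive proot := PM of nat & nat | PP of nat & nat | PS of nat | PL of nat.

Definition proot_enc (r : proot) : nat * nat * nat :=
  match r with
  | PM i j => (0, i, j) | PP i j => (1, i, j) | PS i => (2, i, 0) | PL i => (3, i, 0)
  end%N.
Definition proot_dec (x : nat * nat * nat) : option proot :=
  match x with
  | (0, i, j) => Some (PM i j) | (1, i, j) => Some (PP i j)
  | (2, i, _) => Some (PS i) | (3, i, _) => Some (PL i) | _ => None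
  end%N.
Lemma proot_encK : pcancel proot_enc proot_dec. Proof. by case. Qed.
HB.instance Definition _ := Equality.copy proot (pcan_type proot_encK).

Definition idx_pairs (n : nat) : seq (nat * nat) :=
  [seq (i, j) | i <- iota 1 n, j <- [seq j <- iota 1 n | (i < j)%N]].

Definition posroots (t : rtype) (n : nat) : seq proot :=
  [seq PM p.1 p.2 | p <- idx_pairs n] ++ [seq PP p.1 p.2 | p <- idx_pairs n] ++
  match t with
  | TypeB => [seq PS i | i <- iota 1 n]
  | TypeC => [seq PL i | i <- iota 1 n]
  | TypeD => [::]
  end.

Local Open Scope ring_scope.

(* standard basis vector eps_i (1-based) of Q^n *)
Definition eps (n i : nat) : 'rV[rat]_n := \row_(k < n) ((k.+1 == i)%:R).

Definition vec (n : nat) (r : proot) : 'rV[rat]_n :=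
  match r with
  | PM i j => eps n i - eps n j
  | PP i j => eps n i + eps n j
  | PS i => eps n i
  | PL i => 2%:R *: eps n i
  end.

Definition dot (n : nat) (u v : 'rV[rat]_n) : rat := \sum_(k < n) u 0 k * v 0 k.

Definition refl (n : nat) (b v : 'rV[rat]_n) : 'rV[rat]_n :=
  v - ((2%:R * dot n v b) / dot n b b) *: b.

Definition sigma (n : nat) (D : seq proot) (v : 'rV[rat]_n) : 'rV[rat]_n :=
  foldr (fun b w => refl n (vec n b) w) v D.

Definition orthogonal_subset (t : rtype) (n : nat) (D : seq proot) : bool :=
  [&& uniq D, all (fun a => a \in posroots t n) D &
      pairwise (fun a b => dot n (vec n a) (vec n b) == 0) D].

Definition length_sigma (t : rtype) (n : nat) (D : seq proot) : nat :=
  count (fun a => sigma n D (vec n a) \in [seq - vec n b | b <- posroots t n])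
        (posroots t n).

Definition col (r : proot) : nat :=
  match r with PM i _ => i | PP i _ => i | PS i => i | PL i => i end.
Definition row (r : proot) : int :=
  match r with
  | PM _ j => Posz j | PP _ j => - Posz j | PS _ => 0 | PL i => - Posz i
  end.

Definition Rrow (t : rtype) (n : nat) (i : int) : seq proot :=
  [seq a <- posroots t n | row a == i].
Definition Ccol (t : rtype) (n : nat) (j : nat) : seq proot :=
  [seq a <- posroots t n | col a == j].

Definition Sset (t : rtype) (n : nat) (beta : proot) : seq proot :=
  [seq a <- posroots t n | vec n beta - vec n a \in [seq vec n b | b <- posroots t n]].

Definition tposroots (t : rtype) (n j : nat) : seq proot :=
  [seq a <- posroots t n | [&& a \notin Ccol t n 1, a \notin Ccol t n j,
                               a \notin Rrow t n (Posz j) & a \notin Rrow t n (- Posz j)]].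

Definition length_tilde (t : rtype) (n j : nat) (Dt : seq proot) : nat :=
  count (fun a => sigma n Dt (vec n a) \notin [seq vec n b | b <- tposroots t n j])
        (tposroots t n j).

From Pilot Require Import Defs.
From HB Require Import structures.
From mathcomp Require Import all_boot all_order all_algebra.
Import Order.TTheory GRing.Theory Num.Theory.

(* The Weyl group acts on the signed unit vectors +-eps_x by signed permutations:
   a reflection r_b is the signed transposition [sact b].  Hence sigma_L sends a
   positive root alpha to +-(root_image L alpha), again a positive root, and
   l(sigma_D) counts the alpha whose image carries a minus sign [length_sigmaE].
   Orthogonality to beta forces D = L1 ++ beta :: L2 with L1, L2 inside tilde
   Phi^+ [decompose], so sigma_D swaps eps_1 and eps_j and acts as tilde sigma =
   sigma_{L1 ++ L2} on the other indices.  The count then splits in two: inside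
   tilde Phi^+ it is l'(tilde sigma) [count_inside, length_tildeE]; outside,
   comparing row by row with the explicit form of S(beta) [mem_Sset] gives
   |S(beta)| + 1 [count_outside], the one global step being that tilde sigma
   permutes the indices of tilde Phi [row1_perm]. *)

Section Coordinates.
Local Open Scope ring_scope.
Variable n : nat.
Implicit Types (u v w : 'rV[rat]_n) (c : rat).

Definition coord v (m : nat) : rat := dot n (eps n m) v.

Lemma dotC u v : dot n u v = dot n v u.
Proof. by apply: eq_bigr => k _; rewrite mulrC. Qed.

Lemma dotDl u v w : dot n (u + v) w = dot n u w + dot n v w.
Proof. by rewrite /dot -big_split; apply: eq_bigr => k _; rewrite mxE mulrDl. Qed.

Lemma dotNl u w : dot n (- u) w = - dot n u w.
Proof. by rewrite /dot -sumrN; apply: eq_bigr => k _; rewrite mxE mulNr. Qed.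

Lemma dotZl c u w : dot n (c *: u) w = c * dot n u w.
Proof. by rewrite /dot mulr_sumr; apply: eq_bigr => k _; rewrite mxE mulrA. Qed.

Lemma coordD u v m : coord (u + v) m = coord u m + coord v m.
Proof. by rewrite /coord dotC dotDl !(dotC _ (eps n m)). Qed.

Lemma coordN u m : coord (- u) m = - coord u m.
Proof. by rewrite /coord dotC dotNl dotC. Qed.

Lemma coordZ c u m : coord (c *: u) m = c * coord u m.
Proof. by rewrite /coord dotC dotZl dotC. Qed.

Lemma coordB u v m : coord (u - v) m = coord u m - coord v m.
Proof. by rewrite coordD coordN. Qed.

Lemma coord_entry v (k : 'I_n) : coord v k.+1 = v 0 k.
Proof.
rewrite /coord /dot (bigD1 k) //= big1 ?addr0 => [|i /negbTE ik].
  by rewrite mxE eqxx mul1r.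
by rewrite mxE eqSS (inj_eq val_inj) ik mul0r.
Qed.

Lemma coord_ext u v : (forall m, (0 < m <= n)%N -> coord u m = coord v m) -> u = v.
Proof. by move=> H; apply/rowP => k; rewrite -!coord_entry H ?ltn_ord. Qed.

Lemma coord_epsC i m : coord (eps n i) m = coord (eps n m) i.
Proof. exact: dotC. Qed.

Lemma coord_eps i m : (0 < i <= n)%N -> coord (eps n i) m = (i == m)%:R.
Proof.
case: i => // i /= ltin.
by rewrite /coord dotC -[i.+1]/(Ordinal ltin).+1 -/(coord _ _) coord_entry mxE.
Qed.

Definition csum v : rat := dot n v (\row_(k < n) 1).

Lemma csumD u v : csum (u + v) = csum u + csum v. Proof. exact: dotDl. Qed.
Lemma csumN u : csum (- u) = - csum u. Proof. exact: dotNl. Qed.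
Lemma csumZ c u : csum (c *: u) = c * csum u. Proof. exact: dotZl. Qed.

Lemma csum_eps i : (0 < i <= n)%N -> csum (eps n i) = 1.
Proof.
case: i => // i /= ltin.
by rewrite /csum -[i.+1]/(Ordinal ltin).+1 -/(coord _ _) coord_entry mxE.
Qed.

End Coordinates.

Definition root_ok (t : rtype) (n : nat) (b : proot) : bool :=
  match b with
  | PM a c | PP a c => [&& 0 < a, a < c & c <= n]
  | PS a => if t is TypeB then 0 < a <= n else false
  | PL a => if t is TypeC then 0 < a <= n else false
  end.

Definition shorts (t : rtype) (n : nat) : seq proot :=
  match t with
  | TypeB => [seq PS i | i <- iota 1 n]
  | TypeC => [seq PL i | i <- iota 1 n]
  | TypeD => [::]
  end.

Lemma posrootsE t n : posroots t n =
  [seq PM p.1 p.2 | p <- idx_pairs n] ++ [seq PP p.1 p.2 | p <- idx_pairs n] ++ shorts t n.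
Proof. by []. Qed.

Lemma mem_idx_pairs n a c : ((a, c) \in idx_pairs n) = [&& 0 < a, a < c & c <= n].
Proof.
apply/allpairsPdep/idP => [[x [y [hx hy [-> ->]]]]|/and3P [a0 ac cn]].
  move: hy hx; rewrite mem_filter !mem_iota !add1n !ltnS => /andP [-> /andP [_ ->]].
  by case/andP=> ->.
exists a, c; rewrite mem_filter !mem_iota !add1n !ltnS ac a0 cn.
by rewrite (leq_trans (ltnW ac) cn) (leq_trans a0 (ltnW ac)).
Qed.

Lemma mem_posroots t n b : (b \in posroots t n) = root_ok t n b.
Proof.
have notin (T : eqType) (f : T -> proot) s x :
    (forall y, f y != x) -> (x \in map f s) = false.
  by move=> fx; apply/negbTE/mapP => [[y _ /eqP]]; rewrite eq_sym (negbTE (fx y)).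
have inj_PM : injective (fun p : nat * nat => PM p.1 p.2) by move=> [? ?] [? ?] [-> ->].
have inj_PP : injective (fun p : nat * nat => PP p.1 p.2) by move=> [? ?] [? ?] [-> ->].
have inj_PS : injective PS by move=> ? ? [].
have inj_PL : injective PL by move=> ? ? [].
rewrite posrootsE !mem_cat /shorts.
case: b => [a c|a c|a|a]; case: t => /=.
all: rewrite ?(mem_map inj_PS) ?(mem_map inj_PL) ?mem_iota ?add1n ?ltnS.
- by rewrite (mem_map inj_PM _ (a, c)) mem_idx_pairs !notin ?orbF.
- by rewrite (mem_map inj_PM _ (a, c)) mem_idx_pairs !notin ?orbF.
- by rewrite (mem_map inj_PM _ (a, c)) mem_idx_pairs notin ?orbF.
- by rewrite (mem_map inj_PP _ (a, c)) mem_idx_pairs !notin ?orbF.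
- by rewrite (mem_map inj_PP _ (a, c)) mem_idx_pairs !notin ?orbF.
- by rewrite (mem_map inj_PP _ (a, c)) mem_idx_pairs notin ?orbF.
all: by rewrite !notin.
Qed.

Definition last_idx (b : proot) : nat :=
  match b with PM _ c | PP _ c => c | PS a | PL a => a end.

Section RootGeometry.
Local Open Scope ring_scope.
Context {t : rtype} {n : nat}.
Implicit Types (b : proot) (m : nat).

Lemma root_indices b : b \in posroots t n ->
  [&& (0 < Defs.col b)%N, (Defs.col b <= last_idx b)%N & (last_idx b <= n)%N].
Proof.
rewrite mem_posroots; case: b => [a c|a c|a|a] /=.
- by case/and3P=> -> /ltnW -> ->.
- by case/and3P=> -> /ltnW -> ->.
- by case: t => // /andP [-> ->]; rewrite leqnn.
- by case: t => // /andP [-> ->]; rewrite leqnn.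
Qed.

Lemma coord_vec b m : b \in posroots t n -> coord n (vec n b) m =
  match b with
  | PM a c => (a == m)%:R - (c == m)%:R
  | PP a c => (a == m)%:R + (c == m)%:R
  | PS a => (a == m)%:R
  | PL a => 2%:R * (a == m)%:R
  end.
Proof.
move=> hb; have /and3P [c0 cl ln] := root_indices _ hb.
have ha : (0 < Defs.col b <= n)%N by rewrite c0 (leq_trans cl ln).
have hc : (0 < last_idx b <= n)%N by rewrite (leq_trans c0 cl) ln.
by case: b {hb c0 cl ln} ha hc => [a c|a c|a|a] /= ha hc;
  rewrite ?coordB ?coordD ?coordZ !coord_eps.
Qed.

Lemma coord_support b m : b \in posroots t n -> coord n (vec n b) m != 0 ->
  (m == Defs.col b) || (m == last_idx b).
Proof.
move=> hb; rewrite (coord_vec _ _ hb) !(eq_sym m).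
by case: b {hb} => [a c|a c|a|a] /=; case: (a == m); rewrite ?mulr0 ?eqxx //;
  case: (c == m).
Qed.

Lemma coord_col_pos b : b \in posroots t n -> 0 < coord n (vec n b) (Defs.col b).
Proof.
move=> hb; rewrite (coord_vec _ _ hb); move: hb; rewrite mem_posroots.
case: b => [a c|a c|a|a] /=; rewrite ?eqxx // => /and3P [_ ac _].
all: by rewrite (gtn_eqF ac).
Qed.

Lemma coord_below_col b m : b \in posroots t n -> (m < Defs.col b)%N ->
  coord n (vec n b) m = 0.
Proof.
move=> hb lt_m; apply/eqP; apply: contraTT lt_m => /(coord_support _ _ hb).
have /and3P [_ cl _] := root_indices _ hb.
by case/orP=> /eqP ->; rewrite -leqNgt.
Qed.

Lemma coord_last_nz b : b \in posroots t n -> coord n (vec n b) (last_idx b) != 0.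
Proof.
move=> hb; rewrite (coord_vec _ _ hb); move: hb; rewrite mem_posroots.
case: b => [a c|a c|a|a] /=; rewrite ?eqxx // => /and3P [_ ac _].
all: by rewrite (ltn_eqF ac).
Qed.

Lemma vec_neq_opp b b' : b \in posroots t n -> b' \in posroots t n ->
  vec n b <> - vec n b'.
Proof.
wlog le_cols : b b' / (Defs.col b <= Defs.col b')%N => [hwlog|] hb hb' e.
  case: (leqP (Defs.col b) (Defs.col b')) => [/hwlog|/ltnW/hwlog]; apply=> //.
  by rewrite e opprK.
have := coord_col_pos _ hb; rewrite e coordN oppr_gt0.
case: (ltngtP (Defs.col b) (Defs.col b')) le_cols => // [lt_cols|->] _.
  by rewrite coord_below_col ?ltxx.
by move=> /(lt_trans (coord_col_pos _ hb')); rewrite ltxx.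
Qed.

Lemma dot_vec b w : dot n (vec n b) w =
  match b with
  | PM a c => coord n w a - coord n w c
  | PP a c => coord n w a + coord n w c
  | PS a => coord n w a
  | PL a => 2%:R * coord n w a
  end.
Proof. by case: b => * /=; rewrite ?dotDl ?dotNl ?dotZl. Qed.

Lemma dot_vec_self b : b \in posroots t n ->
  dot n (vec n b) (vec n b) = match b with PS _ => 1 | PL _ => 4%:R | _ => 2%:R end.
Proof.
move=> hb; have cv m := coord_vec b m hb; move: hb cv; rewrite dot_vec mem_posroots.
case: b => [a c|a c|a|a] /= hb cv; rewrite !cv !eqxx //.
all: by case/and3P: hb => _ ac _; rewrite (ltn_eqF ac) (gtn_eqF ac).
Qed.

Lemma csum_vec b : b \in posroots t n ->
  csum n (vec n b) = match b with PM _ _ => 0 | PS _ => 1 | _ => 2%:R end.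
Proof.
move=> hb; have /and3P [c0 cl ln] := root_indices _ hb.
have ha : (0 < Defs.col b <= n)%N by rewrite c0 (leq_trans cl ln).
have hc : (0 < last_idx b <= n)%N by rewrite (leq_trans c0 cl) ln.
by case: b {hb c0 cl ln} ha hc => [a c|a c|a|a] /= ha hc;
  rewrite ?csumD ?csumN ?csumZ !csum_eps ?subrr ?mulr1.
Qed.

Lemma csum_vec_ge0 b : b \in posroots t n -> 0 <= csum n (vec n b).
Proof. by move=> hb; rewrite (csum_vec _ hb); case: b {hb}. Qed.

Lemma support_le2 b m1 m2 m3 : b \in posroots t n ->
  m1 != m2 -> m1 != m3 -> m2 != m3 -> coord n (vec n b) m1 != 0 ->
  coord n (vec n b) m2 != 0 -> coord n (vec n b) m3 != 0 -> False.
Proof.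
move=> hb d12 d13 d23 /(coord_support _ _ hb) h1 /(coord_support _ _ hb) h2
  /(coord_support _ _ hb) h3.
by move: h1 h2 h3 d12 d13 d23; do 3! case/orP => /eqP ->; rewrite ?eqxx.
Qed.

End RootGeometry.

(* A signed index (s, x) stands for the signed unit vector (-1)^s eps_x.  The
   reflection r_b permutes signed unit vectors: it sends the index x to
   [swap_idx b x] and changes the sign exactly when [flips b x]. *)
Definition swap_idx (b : proot) (x : nat) : nat :=
  match b with
  | PM a c | PP a c => if x == a then c else if x == c then a else x
  | _ => x
  end.

Definition flips (b : proot) (x : nat) : bool :=
  match b with
  | PM _ _ => false
  | PP a c => (x == a) || (x == c)
  | PS a | PL a => x == a
  end.

Definition sact (b : proot) (p : bool * nat) : bool * nat :=
  (p.1 (+) flips b p.2, swap_idx b p.2).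

Definition sperm (L : seq proot) (p : bool * nat) : bool * nat := foldr sact p L.

Lemma spermE L s x :
  sperm L (s, x) = (s (+) (sperm L (false, x)).1, (sperm L (false, x)).2).
Proof. by elim: L => [|b L /= ->]; rewrite ?addbF // /sact /= addbA. Qed.

(* The positive root r such that (-1)^s eps_x + (-1)^u eps_y = +-r, paired
   with the sign (true meaning "-"). *)
Definition pair_root (p q : bool * nat) : bool * proot :=
  let: (s, x) := p in let: (u, y) := q in
  if (x < y)%N then (s, if s == u then PP x y else PM x y)
  else (u, if s == u then PP y x else PM y x).

(* sigma_L(alpha) = +- root_image L alpha, with the sign as first component. *)
Definition root_image (L : seq proot) (b : proot) : bool * proot :=
  match b with
  | PM a c => pair_root (sperm L (false, a)) (sperm L (true, c))
  | PP a c => pair_root (sperm L (false, a)) (sperm L (false, c))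
  | PS a => let p := sperm L (false, a) in (p.1, PS p.2)
  | PL a => let p := sperm L (false, a) in (p.1, PL p.2)
  end.

Section SignedVectors.
Local Open Scope ring_scope.
Context {t : rtype} {n : nat}.

Definition seps (p : bool * nat) : 'rV[rat]_n := if p.1 then - eps n p.2 else eps n p.2.
Definition svec (p : bool * proot) : 'rV[rat]_n := if p.1 then - vec n p.2 else vec n p.2.

Lemma coord_seps p m : coord n (seps p) m = (if p.1 then -1 else 1) * coord n (eps n p.2) m.
Proof. by rewrite /seps; case: p.1; rewrite ?coordN ?mulN1r ?mul1r. Qed.

Lemma refl_seps b p : b \in posroots t n -> refl n (vec n b) (seps p) = seps (sact b p).
Proof.
case: p => s x hb; apply: coord_ext => m hm.
have cx y : coord n (eps n y) m = (y == m)%:R by rewrite coord_epsC coord_eps // eq_sym.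
rewrite /refl coordB coordZ dotC dot_vec (dot_vec_self _ hb) !coord_seps !cx.
have /and3P [c0 cl ln] := root_indices _ hb.
have ha : (0 < Defs.col b <= n)%N by rewrite c0 (leq_trans cl ln).
have hc : (0 < last_idx b <= n)%N by rewrite (leq_trans c0 cl) ln.
have cv := coord_vec _ m hb; move: hb cv ha hc; clear c0 cl ln; rewrite mem_posroots.
case: b => [a c|a c|a|a] /= hb cv ha hc;
  rewrite !cv /sact /= !coord_seps !(coord_epsC _ x) !coord_eps //=.
1,2: case/and3P: hb => _ ac _; case: (eqVneq x a) => [->|xa];
  [|case: (eqVneq x c) => [->|xc]]; rewrite ?eqxx ?(ltn_eqF ac) ?(gtn_eqF ac) //=;
  rewrite ?(negbTE xa) ?(negbTE xc) ?(eq_sym a x) ?(eq_sym c x) ?(negbTE xa) ?(negbTE xc).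
7,8: by case: (eqVneq x a) => [->|xa]; rewrite ?eqxx ?(eq_sym a x) ?(negbTE xa);
  case: s; case: (a == m); case: (x == m).
all: by case: s; case: (a == m); case: (c == m); try case: (x == m).
Qed.

Lemma reflD w u v : refl n w (u + v) = refl n w u + refl n w v.
Proof. by rewrite /refl dotDl mulrDr mulrDl scalerDl opprD addrACA. Qed.

Lemma reflZ w c u : refl n w (c *: u) = c *: refl n w u.
Proof. by rewrite /refl dotZl scalerBr scalerA !mulrA (mulrC 2 c). Qed.

Lemma sigmaD L u v : sigma n L (u + v) = sigma n L u + sigma n L v.
Proof. by elim: L => //= b L ->; rewrite reflD. Qed.

Lemma sigmaZ L c u : sigma n L (c *: u) = c *: sigma n L u.
Proof. by elim: L => //= b L ->; rewrite reflZ. Qed.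

Lemma sigma_seps L p : all (mem (posroots t n)) L -> sigma n L (seps p) = seps (sperm L p).
Proof. by elim: L => //= b L IH /andP [hb /IH ->]; rewrite refl_seps. Qed.

Lemma seps_pair p q : seps p + seps q = svec (pair_root p q).
Proof.
case: p q => [s x] [u y]; rewrite /pair_root /svec /seps /=.
by case: ltnP => _; case: s; case: u; rewrite /= ?opprD ?opprB ?opprK // addrC.
Qed.

Lemma sigma_vec L b : all (mem (posroots t n)) L ->
  sigma n L (vec n b) = svec (root_image L b).
Proof.
move=> hL; case: b => [a c|a c|a|a] /=.
- by rewrite -[_ - _]/(seps (false, a) + seps (true, c)) sigmaD !sigma_seps // seps_pair.
- by rewrite -[_ + _]/(seps (false, a) + seps (false, c)) sigmaD !sigma_seps // seps_pair.
- by rewrite -[eps n a]/(seps (false, a)) sigma_seps // /seps /svec.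
- rewrite -[eps n a]/(seps (false, a)) sigmaZ sigma_seps // /seps /svec /=.
  by case: (sperm L (false, a)).1; rewrite ?scalerN.
Qed.

End SignedVectors.

Section SignedPermutation.
Context {t : rtype} {n : nat}.
Implicit Types (L : seq proot) (b : proot).

(* Each signed transposition is an involution, so products are injective. *)
Lemma sact_inv b : b \in posroots t n -> involutive (sact b).
Proof.
move=> + [s x]; rewrite mem_posroots /sact /=.
case: b => [a c|a c|a|a] /=; rewrite -?addbA ?addbb ?addbF //.
all: case/and3P=> _ ac _; case: (eqVneq x a) => [->|xa]; rewrite ?eqxx ?(gtn_eqF ac) ?eqxx.
all: try case: (eqVneq x c) => [->|xc]; rewrite ?eqxx ?(negbTE xa) ?(negbTE xc) ?orbT //=.
all: by rewrite addbF.
Qed.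

Lemma sperm_inj {L} : all (mem (posroots t n)) L -> injective (sperm L).
Proof.
elim: L => [_ ? ? //|b L IH /= /andP [hb /IH inj_L]].
by move=> p q /(inv_inj (sact_inv _ hb)) /inj_L.
Qed.

Lemma sperm_idx_inj {L s u x y} : all (mem (posroots t n)) L ->
  (sperm L (s, x)).2 = (sperm L (u, y)).2 -> x = y.
Proof.
move=> hL; rewrite (spermE _ s) (spermE _ u) /=.
case ex: (sperm L (false, x)) => [sx x']; case ey: (sperm L (false, y)) => [sy y'] /= exy.
have : sperm L (sx (+) sy, y) = sperm L (false, x).
  by rewrite spermE ey ex /= -addbA addbb addbF exy.
by move/(sperm_inj hL) => [].
Qed.

Lemma sperm_range L s x : all (mem (posroots t n)) L -> (0 < x <= n)%N ->
  (0 < (sperm L (s, x)).2 <= n)%N.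
Proof.
elim: L => [|b L IH] //= /andP [hb /IH{}IH] /IH; rewrite /sact /=.
case: (sperm L (s, x)) => _ y /= hy.
have /and3P [c0 cl ln] := root_indices _ hb.
have hc : (0 < Defs.col b <= n)%N by rewrite c0 (leq_trans cl ln).
have hl : (0 < last_idx b <= n)%N by rewrite (leq_trans c0 cl) ln.
by case: b {hb c0 cl ln} hc hl => //= a c hc hl; do 2 case: eqP => _ //.
Qed.

Lemma pair_root_pos p q : p.2 != q.2 -> (0 < p.2 <= n)%N -> (0 < q.2 <= n)%N ->
  (pair_root p q).2 \in posroots t n.
Proof.
case: p q => [s x] [u y] /= xy /andP [x0 xn] /andP [y0 yn]; rewrite /pair_root.
case: ltnP => h; case: (s == u); rewrite /= mem_posroots /= ?x0 ?y0 ?h ?xn ?yn //.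
all: by rewrite ltn_neqAle h eq_sym xy.
Qed.

Lemma root_image_pos L b : all (mem (posroots t n)) L -> b \in posroots t n ->
  (root_image L b).2 \in posroots t n.
Proof.
move=> hL hb; have /and3P [c0 cl ln] := root_indices _ hb.
have hc : (0 < Defs.col b <= n)%N by rewrite c0 (leq_trans cl ln).
have hl : (0 < last_idx b <= n)%N by rewrite (leq_trans c0 cl) ln.
move: hb; rewrite mem_posroots.
case: b {c0 cl ln} hc hl => [a c|a c|a|a] /= ha hc hb.
1,2: case/and3P: hb => _ /ltn_eqF ac _; apply: pair_root_pos; rewrite ?sperm_range //.
1,2: by apply: contraFneq ac => /(sperm_idx_inj hL) ->.
all: by rewrite mem_posroots /=; case: t hb => //; rewrite sperm_range.
Qed.

End SignedPermutation.

Section Lengths.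
Local Open Scope ring_scope.
Context {t : rtype} {n : nat}.

Lemma svec_negroots b s : b \in posroots t n ->
  (svec (s, b) \in [seq - vec n b' | b' <- posroots t n]) = s.
Proof.
move=> hb; rewrite /svec /=; case: s; first by apply/mapP; exists b.
by apply/negbTE/mapP => -[b' hb' /(vec_neq_opp _ _ hb hb')].
Qed.

Lemma svec_sub_roots (R : seq proot) b s : {subset R <= posroots t n} -> b \in R ->
  (svec (s, b) \in [seq vec n b' | b' <- R]) = ~~ s.
Proof.
move=> sRP hb; rewrite /svec /=; case: s; last by apply/mapP; exists b.
apply/negbTE/mapP => -[b' hb' e].
by apply: (vec_neq_opp _ _ (sRP _ hb) (sRP _ hb')); rewrite -e opprK.
Qed.

Lemma length_sigmaE D : all (mem (posroots t n)) D ->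
  length_sigma t n D = count (fun a => (root_image D a).1) (posroots t n).
Proof.
move=> hD; apply: eq_in_count => a ha /=.
rewrite (sigma_vec _ _ hD); have := root_image_pos _ _ hD ha.
by case: (root_image D a) => s b /= hb; rewrite svec_negroots.
Qed.

Lemma count_leaving (R D : seq proot) : all (mem (posroots t n)) D ->
  {subset R <= posroots t n} -> {in R, forall a, (root_image D a).2 \in R} ->
  count (fun a => sigma n D (vec n a) \notin [seq vec n b | b <- R]) R =
  count (fun a => (root_image D a).1) R.
Proof.
move=> hD sRP stable; apply: eq_in_count => a ha /=.
rewrite (sigma_vec _ _ hD); have := stable a ha.
by case: (root_image D a) => s b /= hb; rewrite svec_sub_roots ?negbK.
Qed.

End Lengths.

Definition avoids (j : nat) (b : proot) : bool :=
  [&& Defs.col b != 1, Defs.col b != j, last_idx b != 1 & last_idx b != j]%N.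

Definition tilde_idx (n j x : nat) : bool := [&& (0 < x <= n)%N, x != 1%N & x != j].

Section TildeRoots.
Variables (t : rtype) (n j : nat).
Hypothesis j_gt1 : (1 < j)%N.

Lemma mem_tposroots b : (b \in tposroots t n j) = (b \in posroots t n) && avoids j b.
Proof.
have pos_neg c : (Posz c == - Posz j)%R = false by case: j j_gt1.
have neg_pos c : (- Posz c == Posz j)%R = false by case: c => [|c]; case: j j_gt1.
rewrite /tposroots /Ccol /Rrow !mem_filter.
case hb: (b \in posroots t n); rewrite ?andbF //= !andbT /avoids.
have /and3P [c0 cl _] := root_indices _ hb; move: hb; rewrite mem_posroots.
case: b c0 cl => [a c|a c|a|a] /= c0 cl; rewrite ?pos_neg ?neg_pos ?eqr_opp ?andbT ?eqz_nat //.
1,2: by case/and3P=> _ ac _; rewrite (gtn_eqF (leq_ltn_trans c0 ac)).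
all: by rewrite ?(ltn_eqF (ltnW j_gt1)); case: (a != 1)%N; case: (a != j).
Qed.

Definition tilde_sub (L : seq proot) : bool := all (mem (tposroots t n j)) L.

Lemma tilde_sub_pos L : tilde_sub L -> all (mem (posroots t n)) L.
Proof. by apply: sub_all => b; rewrite /= mem_tposroots => /andP []. Qed.

Lemma tilde_idx_root b : b \in tposroots t n j ->
  tilde_idx n j (Defs.col b) && tilde_idx n j (last_idx b).
Proof.
rewrite mem_tposroots => /andP [hb /and4P [c1 cj l1 lj]].
have /and3P [c0 cl ln] := root_indices _ hb.
by rewrite /tilde_idx c0 c1 cj l1 lj (leq_trans cl ln) (leq_trans c0 cl) ln.
Qed.

Lemma sact_fix b s x : avoids j b -> (x == 1%N) || (x == j) -> sact b (s, x) = (s, x).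
Proof.
case/and4P=> c1 cj l1 lj /orP [] /eqP ->; rewrite /sact /=.
all: by case: b c1 cj l1 lj => [a c|a c|a|a] /= c1 cj l1 lj;
  rewrite ?(eq_sym 1%N) ?(eq_sym j) ?(negbTE c1) ?(negbTE cj) ?(negbTE l1) ?(negbTE lj) ?addbF.
Qed.

Lemma sact_tilde b s x : b \in tposroots t n j -> tilde_idx n j x ->
  tilde_idx n j (sact b (s, x)).2.
Proof.
move=> hb hx; have /andP [hc hl] := tilde_idx_root _ hb; rewrite /sact /=.
by case: b {hb} hc hl => //= a c hc hl; do 2 case: eqP => _ //.
Qed.

Lemma sperm_fix L s x : tilde_sub L -> (x == 1%N) || (x == j) -> sperm L (s, x) = (s, x).
Proof.
move=> + hx; elim: L => //= b L IH /andP [hb /IH ->].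
by apply: sact_fix hx; move: hb; rewrite mem_tposroots => /andP [].
Qed.

Lemma sperm_tilde L s x : tilde_sub L -> tilde_idx n j x -> tilde_idx n j (sperm L (s, x)).2.
Proof.
move=> + hx; elim: L => //= b L IH /andP [hb /IH].
by case: (sperm L (s, x)) => u y /= hy; apply: sact_tilde.
Qed.

Lemma pair_root_avoids p q : tilde_idx n j p.2 -> tilde_idx n j q.2 ->
  avoids j (pair_root p q).2.
Proof.
case: p q => [s x] [u y] /and3P [_ x1 xj] /and3P [_ y1 yj]; rewrite /pair_root.
by case: ltnP => _; case: (s == u); rewrite /avoids /= ?x1 ?xj ?y1 ?yj.
Qed.

Lemma root_image_tilde L b : tilde_sub L -> b \in tposroots t n j ->
  (root_image L b).2 \in tposroots t n j.
Proof.
move=> hL hb; have /andP [hc hl] := tilde_idx_root _ hb.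
rewrite mem_tposroots (root_image_pos _ _ (tilde_sub_pos _ hL)); last first.
  by move: hb; rewrite mem_tposroots => /andP [].
have tL s x : tilde_idx n j x -> tilde_idx n j (sperm L (s, x)).2 := sperm_tilde L s x hL.
case: b {hb} hc hl => [a c|a c|a|a] /= hc hl.
1,2: by apply: pair_root_avoids; apply: tL.
all: by have := tL false _ hc; rewrite /avoids /= => /and3P [_ -> ->].
Qed.

Lemma root_image_eq L L' b :
  (forall s x, tilde_idx n j x -> sperm L (s, x) = sperm L' (s, x)) ->
  b \in tposroots t n j -> root_image L b = root_image L' b.
Proof.
move=> eqLL' /tilde_idx_root /andP [hc hl].
by case: b hc hl => [a c|a c|a|a] /= hc hl; rewrite !eqLL'.
Qed.

End TildeRoots.

Section Decomposition.
Local Open Scope ring_scope.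
Variables (t : rtype) (n j : nat).
Hypothesis hj : (1 < j <= n)%N.

Lemma orth_tilde b : b \in posroots t n -> Defs.col b != 1%N ->
  dot n (vec n b) (vec n (PM 1 j)) = 0 -> b \in tposroots t n j.
Proof.
case/andP: hj => j1 _ hb c1; rewrite dotC dot_vec.
have /and3P [c0 cl _] := root_indices _ hb.
have c_gt1 : (1 < Defs.col b)%N by rewrite ltn_neqAle eq_sym c1 c0.
rewrite (coord_below_col _ _ hb c_gt1) sub0r => /eqP; rewrite oppr_eq0 => /eqP cj0.
rewrite mem_tposroots // hb /avoids c1 (gtn_eqF (leq_trans c_gt1 cl)) /=.
apply/andP; split; apply/eqP => e.
  by have := coord_col_pos _ hb; rewrite e cj0 ltxx.
by have := coord_last_nz _ hb; rewrite e cj0 eqxx.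
Qed.

Lemma decompose D : orthogonal_subset t n D ->
  (forall a, (a \in D) && (a \in Ccol t n 1) = (a == PM 1 j)) ->
  exists L1 L2, [/\ D = L1 ++ PM 1 j :: L2, tilde_sub t n j L1 & tilde_sub t n j L2].
Proof.
move=> orthD col1.
have : PM 1 j \in D by have := col1 (PM 1 j); rewrite eqxx => /andP [].
move: orthD col1 => + + hbD; case/splitPr: hbD => L1 L2 /and3P [uD posD orth] col1.
have in_tilde b : b \in L1 ++ PM 1 j :: L2 -> b != PM 1 j ->
    dot n (vec n b) (vec n (PM 1 j)) = 0 -> b \in tposroots t n j.
  move=> hbD nb; have hb : b \in posroots t n := allP posD b hbD.
  apply: orth_tilde => //; have := col1 b.
  by rewrite hbD (negbTE nb) /Ccol mem_filter hb andbT /= => ->.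
move: uD; rewrite cat_uniq /= negb_or => /and4P [_ /andP [nL1 _] nL2 _].
move: orth; rewrite pairwise_cat pairwise_cons => /and3P [orth12 _ /andP [orth2 _]].
exists L1, L2; split=> //; apply/allP => b bL; apply: in_tilde.
- by rewrite mem_cat bL.
- by apply: contraNneq nL1 => <-.
- by move/allrelP: orth12 => /(_ b (PM 1 j) bL (mem_head _ _)) /eqP.
- by rewrite mem_cat inE bL !orbT.
- by apply: contraNneq nL2 => <-.
- by move/allP: orth2 => /(_ b bL) /eqP; rewrite dotC.
Qed.

End Decomposition.

Definition in_S (j : nat) (b : proot) : bool :=
  if b is PM a c then ((a == 1) && (c < j)) || ((c == j) && (1 < a)) else false.

Section SSet.
Local Open Scope ring_scope.
Variables (t : rtype) (n j : nat).
Hypothesis hj : (1 < j <= n)%N.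

Lemma mem_Sset_PM a c : PM a c \in posroots t n ->
  (vec n (PM 1 j) - vec n (PM a c) \in [seq vec n b | b <- posroots t n]) = in_S j (PM a c).
Proof.
have [j1 jn] := andP hj; have hbeta : PM 1 j \in posroots t n by rewrite mem_posroots /= hj.
move=> ha; move: (ha); rewrite mem_posroots /= /in_S => /and3P [a0 ac cn].
have [ea1|a1] := eqVneq a 1%N; first subst a.
  (* beta - alpha = eps_c - eps_j: a positive root, a negative root or zero *)
  have -> : vec n (PM 1 j) - vec n (PM 1 c) = eps n c - eps n j.
    by rewrite /= opprB addrC addrA subrK.
  rewrite /=; case: (ltngtP c j) => [lt_cj|lt_jc|->].
  - by apply/mapP; exists (PM c j); rewrite // mem_posroots /= lt_cj jn (ltnW ac).
  - apply/negbTE/mapP => -[b hb e]; apply: (vec_neq_opp _ (PM j c) hb).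
      by rewrite mem_posroots /= lt_jc cn (ltnW j1).
    by rewrite -e /= opprB.
  - apply/negbTE/mapP => -[b hb e]; have := coord_col_pos _ hb.
    by rewrite -e coordB subrr ltxx.
have [ecj|cj] := eqVneq c j; first subst c.
  have a_gt1 : (1 < a)%N by rewrite ltn_neqAle eq_sym a1 a0.
  rewrite a_gt1; apply/mapP; exists (PM 1 a).
    by rewrite mem_posroots /= a_gt1 (ltnW (leq_trans ac jn)).
  by rewrite /= opprB addrA subrK.
(* otherwise beta - alpha has three nonzero coordinates, at 1, c and j *)
apply/negbTE/mapP => -[b hb e].
have c1 : c != 1%N by rewrite gtn_eqF // (leq_ltn_trans a0 ac).
have cv m : coord n (vec n b) m = (1 == m)%:R - (j == m)%:R - ((a == m)%:R - (c == m)%:R).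
  by rewrite -e coordB (coord_vec _ _ hbeta) (coord_vec _ _ ha).
apply: (support_le2 _ 1%N c j hb); rewrite ?cv ?eqxx.
- by rewrite eq_sym.
- by rewrite ltn_eqF.
- by [].
- by rewrite (negbTE a1) (negbTE c1) (gtn_eqF j1).
- by rewrite [1%N == c]eq_sym (negbTE c1) [j == c]eq_sym (negbTE cj) (ltn_eqF ac).
- by rewrite (ltn_eqF j1) (negbTE cj); case: (a == j).
Qed.

Lemma mem_Sset a : a \in posroots t n ->
  (vec n (PM 1 j) - vec n a \in [seq vec n b | b <- posroots t n]) = in_S j a.
Proof.
have hbeta : PM 1 j \in posroots t n by rewrite mem_posroots /= hj.
case: a => [a c|a c|a|a] ha; first exact: mem_Sset_PM.
(* beta - alpha has a negative coordinate sum unless alpha = eps_a - eps_c *)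
all: apply/negbTE/mapP => -[b hb e]; have := csum_vec_ge0 _ hb; rewrite -e.
all: by rewrite csumD csumN (csum_vec _ hbeta) (csum_vec _ ha).
Qed.

End SSet.

Lemma size_Sset t n j : (1 < j <= n)%N ->
  size (Sset t n (PM 1 j)) = count (in_S j) (posroots t n).
Proof. by move=> hj; rewrite size_filter; apply: eq_in_count => a; apply: mem_Sset. Qed.

Lemma perm_map_self (T : eqType) (f : T -> T) (s : seq T) : uniq s -> injective f ->
  {in s, forall x, f x \in s} -> perm_eq (map f s) s.
Proof.
move=> us inj_f fs; apply: uniq_perm => //; first by rewrite map_inj_uniq.
apply: (uniq_min_size _ _ _).2; rewrite ?map_inj_uniq ?size_map //.
by move=> _ /mapP [x hx ->]; apply: fs.
Qed.

Section CountRoots.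
Variables (t : rtype) (n : nat).
Implicit Type P : pred proot.

Definition pair_count P (i k : nat) : nat := P (PM i k) + P (PP i k).
Definition row_count P (i : nat) : nat := \sum_(k <- iota 1 n | i < k) pair_count P i k.

Lemma count_posroots P : 0 < n -> count P (posroots t n) =
  row_count P 1 + \sum_(i <- iota 2 n.-1) row_count P i + count P (shorts t n).
Proof.
move=> n0; rewrite posrootsE !count_cat !count_map addnA; congr (_ + _).
have sum_count (T : Type) (Q : pred T) s : \sum_(x <- s) Q x = count Q s.
  by elim: s => [|x s IH]; rewrite ?big_nil ?big_cons ?IH.
rewrite -!sum_count /idx_pairs !big_allpairs_dep -big_split /=.
rewrite (eq_bigr (row_count P)) => [|i _]; last first.
  by rewrite /row_count /pair_count !big_filter -big_split.
have -> : iota 1 n = 1 :: iota 2 n.-1 by rewrite -(prednK n0).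
by rewrite big_cons.
Qed.

End CountRoots.

Lemma in_S_row1 j k : pair_count (in_S j) 1 k = (k < j).
Proof. by rewrite /pair_count /= addn0 andbF orbF. Qed.

Lemma in_S_row j i k : 1 < i -> pair_count (in_S j) i k = (k == j).
Proof. by move=> i1; rewrite /pair_count /= (gtn_eqF i1) i1 andbT addn0. Qed.

Lemma in_S_shorts t n j : count (in_S j) (shorts t n) = 0.
Proof. by rewrite /shorts; case: t => //; elim: (iota 1 n). Qed.

Lemma count_split (T : Type) (P Q : pred T) (s : seq T) :
  count P s = count (fun x => Q x && P x) s + count (fun x => ~~ Q x && P x) s.
Proof. by rewrite -!count_filter -size_filter count_predC. Qed.

(* Of eps_x + eps_y and eps_x - eps_y (up to a common sign of eps_y), exactly one
   is a negative root when y < x, and none when x < y. *)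
Lemma pair_root_sign_sum x u y : x != y ->
  ((pair_root (false, x) (u, y)).1 + (pair_root (false, x) (~~ u, y)).1 = (y < x) :> nat)%N.
Proof.
by rewrite /pair_root; case: (ltngtP x y) => [lt|lt|->] /=; rewrite ?eqxx //; case: u.
Qed.

Section Split.
Variables (t : rtype) (n j : nat) (L1 L2 : seq proot).
Hypothesis hj : (1 < j <= n)%N.
Hypothesis tL1 : tilde_sub t n j L1.
Hypothesis tL2 : tilde_sub t n j L2.

Local Notation D := (L1 ++ PM 1 j :: L2).
Local Notation Dt := (L1 ++ L2).

Let j_gt1 : (1 < j)%N. Proof. by case/andP: hj. Qed.

Lemma tilde_sub_Dt : tilde_sub t n j Dt.
Proof. by rewrite /tilde_sub all_cat; apply/andP; split; [exact: tL1 | exact: tL2]. Qed.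

Lemma D_pos : all (mem (posroots t n)) D.
Proof.
rewrite all_cat /= (tilde_sub_pos _ _ _ j_gt1 _ tL1) (tilde_sub_pos _ _ _ j_gt1 _ tL2) andbT.
by rewrite mem_posroots /= hj.
Qed.

Lemma filter_D : [seq a <- D | a \in tposroots t n j] = Dt.
Proof.
have keep L : tilde_sub t n j L -> [seq a <- L | a \in tposroots t n j] = L.
  by move=> /allP tL; apply/all_filterP/allP.
by rewrite filter_cat /= keep // keep // mem_tposroots ?j_gt1 // /avoids /= andbF.
Qed.

Lemma sperm_D_1 s : sperm D (s, 1%N) = (s, j).
Proof.
rewrite /sperm foldr_cat /= -/(sperm L2 _) (sperm_fix _ _ _ j_gt1 _ _ _ tL2) ?eqxx //.
by rewrite /sact /= ?eqxx ?addbF -/(sperm L1 _) (sperm_fix _ _ _ j_gt1 _ _ _ tL1) ?eqxx ?orbT.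
Qed.

Lemma sperm_D_j s : sperm D (s, j) = (s, 1%N).
Proof.
rewrite /sperm foldr_cat /= -/(sperm L2 _) (sperm_fix _ _ _ j_gt1 _ _ _ tL2) ?eqxx ?orbT //.
rewrite /sact /= ?eqxx (gtn_eqF j_gt1) ?eqxx ?addbF -/(sperm L1 _).
by rewrite (sperm_fix _ _ _ j_gt1 _ _ _ tL1).
Qed.

Lemma sperm_D_tilde s x : tilde_idx n j x -> sperm D (s, x) = sperm Dt (s, x).
Proof.
move=> hx; rewrite /sperm !foldr_cat /= -!/(sperm L2 _).
have := sperm_tilde _ _ _ j_gt1 _ s _ tL2 hx.
by case: (sperm L2 _) => u y /and3P [_ y1 yj]; rewrite /sact /= (negbTE y1) (negbTE yj) addbF.
Qed.

Lemma root_image_D b : b \in tposroots t n j -> root_image D b = root_image Dt b.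
Proof. by apply: (root_image_eq _ _ _ j_gt1) => s x; apply: sperm_D_tilde. Qed.

Lemma length_tildeE :
  length_tilde t n j Dt = count (fun a => (root_image Dt a).1) (tposroots t n j).
Proof.
apply: count_leaving; first exact: (tilde_sub_pos _ _ _ j_gt1 _ tilde_sub_Dt).
  by move=> b; rewrite mem_tposroots ?j_gt1 // => /andP [].
by move=> b; apply: (root_image_tilde _ _ _ j_gt1 _ _ tilde_sub_Dt).
Qed.

Lemma count_inside :
  count (fun a => (a \in tposroots t n j) && (root_image D a).1) (posroots t n) =
  count (fun a => (root_image Dt a).1) (tposroots t n j).
Proof.
rewrite [in RHS]/tposroots count_filter; apply: eq_in_count => a ha /=.
case ht: (a \in tposroots t n j).
  by rewrite root_image_D // andbC; move: ht; rewrite mem_filter ha andbT => ->.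
by move: ht; rewrite mem_filter ha andbT => ->; rewrite andbF.
Qed.

Definition neg_outside (a : proot) : bool := (a \notin tposroots t n j) && (root_image D a).1.

Lemma col1_not_tilde a : Defs.col a = 1%N -> a \notin tposroots t n j.
Proof. by move=> c1; rewrite mem_tposroots ?j_gt1 // /avoids c1 eqxx andbF. Qed.

Lemma neg_outside_row1 k : tilde_idx n j k ->
  pair_count neg_outside 1 k = ((sperm Dt (false, k)).2 < j)%N.
Proof.
move=> hk; rewrite /pair_count /neg_outside !col1_not_tilde //= !sperm_D_1 !sperm_D_tilde //.
have /and3P [_ _ yj] := sperm_tilde _ _ _ j_gt1 _ false _ tilde_sub_Dt hk.
rewrite (spermE _ true) addnC; case: (sperm Dt (false, k)) yj => u y /= yj.
by rewrite -(negbK u) pair_root_sign_sum 1?eq_sym.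
Qed.

Lemma neg_outside_1j : pair_count neg_outside 1 j = 1%N.
Proof.
rewrite /pair_count /neg_outside !col1_not_tilde //= !sperm_D_1 !sperm_D_j /pair_root.
by rewrite ltnNge (ltnW j_gt1).
Qed.

Lemma neg_outside_row i k : (1 < i < k)%N -> (k <= n)%N ->
  pair_count neg_outside i k = (k == j).
Proof.
case/andP=> i1 ik kn; have k1 := ltn_trans i1 ik.
have [ekj|kj] := eqVneq k j.
  subst k; have hi : tilde_idx n j i.
    by rewrite /tilde_idx (gtn_eqF i1) (ltn_eqF ik) (ltnW i1) (leq_trans (ltnW ik) kn).
  rewrite /pair_count /neg_outside /root_image !sperm_D_j !sperm_D_tilde //.
  rewrite !mem_tposroots ?j_gt1 //.
  rewrite /avoids /= eqxx !andbF /=; have := sperm_tilde _ _ _ j_gt1 _ false _ tilde_sub_Dt hi.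
  case: (sperm Dt (false, i)) => u y /and3P [/andP [y0 _] y1 _].
  have y_gt1 : (1 < y)%N by rewrite ltn_neqAle eq_sym y1 y0.
  by rewrite /pair_root ltnNge (ltnW y_gt1).
have hk : tilde_idx n j k by rewrite /tilde_idx (gtn_eqF k1) kj (ltnW k1) kn.
have [eij|ij] := eqVneq i j.
  subst i; rewrite /pair_count /neg_outside /root_image !sperm_D_j !sperm_D_tilde //.
  have := sperm_tilde _ _ _ j_gt1 _ true _ tilde_sub_Dt hk; rewrite (spermE _ true).
  case: (sperm Dt (false, k)) => u y /and3P [/andP [y0 _] y1 _].
  have y_gt1 : (1 < y)%N by rewrite ltn_neqAle eq_sym y1 y0.
  by rewrite /pair_root y_gt1 !andbF.
rewrite /pair_count /neg_outside !mem_tposroots ?j_gt1 // !mem_posroots /= ik kn (ltnW i1).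
by rewrite /avoids /= (gtn_eqF i1) ij (gtn_eqF k1) kj.
Qed.

(* The roots eps_a, 2 eps_a never count: for a in {1, j} sigma_D maps them to
   positive roots, and otherwise they lie in tilde Phi^+. *)
Lemma neg_outside_shorts : count neg_outside (shorts t n) = 0%N.
Proof.
apply/eqP; rewrite -leqn0 leqNgt -has_count; apply/hasPn => b hb.
have [a [eb ha]] : exists a, (b = PS a \/ b = PL a) /\ (0 < a <= n)%N.
  by move: hb; rewrite /shorts; case: t => // /mapP [a]; rewrite mem_iota add1n ltnS;
    exists a; split; auto.
rewrite /neg_outside negb_and negbK.
have [a1j|] := boolP ((a == 1%N) || (a == j)).
  by case: eb => ->; case/orP: a1j => /eqP ->; rewrite /= ?sperm_D_1 ?sperm_D_j orbT.
rewrite negb_or => /andP [a1 aj]; apply/orP; left.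
have hbP : b \in posroots t n by rewrite posrootsE !mem_cat hb !orbT.
by rewrite mem_tposroots ?j_gt1 // hbP; case: eb => -> ; rewrite /avoids /= a1 aj.
Qed.

Lemma row_count1_split P : row_count n P 1 =
  pair_count P 1 j + \sum_(k <- iota 1 n | (k != j) && (1 < k)) pair_count P 1 k.
Proof.
have [j1 jn] := andP hj; have jI : j \in iota 1 n by rewrite mem_iota add1n ltnS jn ltnW.
by rewrite /row_count big_mkcond (bigD1_seq j) ?iota_uniq //= -big_mkcondr j1.
Qed.

(* tilde sigma permutes the indices of tilde Phi, so it preserves how many lie below j. *)
Lemma row1_perm :
  \sum_(k <- iota 1 n | (k != j) && (1 < k)) ((sperm Dt (false, k)).2 < j) =
  \sum_(k <- iota 1 n | (k != j) && (1 < k)) (k < j).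
Proof.
rewrite -[LHS]big_filter -[RHS]big_filter; set K := filter _ _.
have memK k : (k \in K) = tilde_idx n j k.
  rewrite mem_filter mem_iota add1n ltnS /tilde_idx.
  by case: k => [|[|k]]; rewrite ?andbF //= andbT andbC.
have pK : perm_eq [seq (sperm Dt (false, k)).2 | k <- K] K.
  apply: perm_map_self; first by rewrite filter_uniq ?iota_uniq.
    by move=> x y /(sperm_idx_inj (tilde_sub_pos _ _ _ j_gt1 _ tilde_sub_Dt)).
  by move=> k; rewrite !memK; apply: (sperm_tilde _ _ _ j_gt1 _ _ _ tilde_sub_Dt).
by rewrite -[RHS](perm_big _ pK) big_map.
Qed.

Lemma count_outside : count neg_outside (posroots t n) = (count (in_S j) (posroots t n)).+1.
Proof.
have [j1 jn] := andP hj; have n0 : (0 < n)%N by rewrite (leq_trans _ jn) // ltnW.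
rewrite !count_posroots // neg_outside_shorts in_S_shorts !addn0 -addSn; congr (_ + _).
  rewrite !row_count1_split neg_outside_1j in_S_row1 ltnn add0n add1n; congr _.+1.
  under [RHS]eq_bigr => k _ do rewrite in_S_row1.
  rewrite -row1_perm [LHS]big_seq_cond [RHS]big_seq_cond; apply: eq_bigr => k /andP [].
  rewrite mem_iota add1n ltnS => /andP [k0 kn] /andP [kj k1].
  by rewrite neg_outside_row1 // /tilde_idx k0 kn (gtn_eqF k1) kj.
rewrite [LHS]big_seq [RHS]big_seq; apply: eq_bigr => i; rewrite mem_iota => /andP [i2 _].
rewrite /row_count [LHS]big_seq_cond [RHS]big_seq_cond; apply: eq_bigr => k /andP [].
rewrite mem_iota add1n ltnS => /andP [_ kn] ik.
by rewrite neg_outside_row ?in_S_row ?i2.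
Qed.

End Split.

Theorem lemma3p2 (t : rtype) (n j : nat) (D : seq proot) :
  (1 < j <= n)%N ->
  orthogonal_subset t n D ->
  (forall a, (a \in D) && (a \in Ccol t n 1) = (a == PM 1 j)) ->
  length_sigma t n D =
    (length_tilde t n j [seq a <- D | a \in tposroots t n j]
     + size (Sset t n (PM 1 j)) + 1)%N.
Proof.
move=> hj orthD col1D.
have [L1 [L2 [-> tL1 tL2]]] := decompose _ _ _ hj _ orthD col1D.
rewrite filter_D // length_sigmaE ?D_pos // length_tildeE // size_Sset //.
rewrite (count_split _ _ (fun a => a \in tposroots t n j)) count_inside //.
by rewrite (count_outside _ _ _ _ _ hj tL1 tL2) addn1 addnS.
Qed.
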